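(* Let $R$ be a w-local ring. Then the functor sending a compactly generated Hausdorff space $X$ over $\pi_0|\operatorname{Spec} R|$ to its relative Betti stack $X^{\mathrm{B}/R}$ is fully faithful (as a functor to stacks over $R$).
   Context: A ring $R$ is w-local (Bhatt--Scholze) if $|\operatorname{Spec} R|$ is w-local: the subspace of closed points is closed and every connected component has a unique closed point. $\pi_0|\operatorname{Spec} R|$ is the (profinite) space of connected components. Stacks over $R$ are accessible fpqc sheaves on $R$-algebras. For a compactly generated Hausdorff space $X$ with a continuous map to $\pi_0|\operatorname{Spec}R|$, its relative Betti stack is $X^{\mathrm{B}/R}(S) := \operatorname{Map}_{\mathrm{Top}/\pi_0|\operatorname{Spec}R|}(|\operatorname{Spec} S|, X)$ for $R$-algebras $S$. *)

From HB Require Import structures.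
From mathcomp Require Import all_boot all_algebra.
From mathcomp Require Import boolp classical_sets topology.
Set Implicit Arguments. Unset Strict Implicit. Unset Printing Implicit Defensive.
Import GRing.Theory.
Local Open Scope classical_set_scope.
Local Open Scope ring_scope.

Definition prime_ideal (S : comPzRingType) (P : set S) : Prop :=
  [/\ P 0,
      (forall a b, P a -> P b -> P (a + b)),
      (forall a b, P b -> P (a * b)),
      ~ P 1 &
      (forall a b, P (a * b) -> P a \/ P b)].

Definition Spec (S : comPzRingType) := {P : set S | prime_ideal P}.

(** Zariski-open subsets: unions of basic opens D(a) = {p | a \notin p} *)
Definition Zopen (S : comPzRingType) (U : set (Spec S)) : Prop :=
  forall p, U p -> exists a : S, ~ (sval p) a /\ (forall q : Spec S, ~ (sval q) a -> U q).

Definition Zclosed (S : comPzRingType) (A : set (Spec S)) : Prop := Zopen (~` A).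

Lemma contract_prime (S T : comPzRingType) (f : {rmorphism S -> T}) (P : set T) :
  prime_ideal P -> prime_ideal (f @^-1` P).
Proof.
case=> P0 PD PM P1 Pp; split; rewrite /preimage /=.
- by rewrite rmorph0.
- by move=> a b Ha Hb; rewrite rmorphD; apply: PD.
- by move=> a b Hb; rewrite rmorphM; apply: PM.
- by rewrite rmorph1.
- by move=> a b; rewrite rmorphM; apply: Pp.
Qed.

Definition specmap (S T : comPzRingType) (f : {rmorphism S -> T}) (p : Spec T) : Spec S :=
  exist _ (f @^-1` sval p) (contract_prime f (svalP p)).

Definition Zcontinuous (S : comPzRingType) (X : topologicalType) (phi : Spec S -> X) : Prop :=
  forall A : set X, open A -> Zopen (phi @^-1` A).

(** C is connected (in the subspace topology; the empty set counts as connected) *)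
Definition Zconnected (R : comPzRingType) (C : set (Spec R)) : Prop :=
  forall U V : set (Spec R), Zopen U -> Zopen V ->
    C `<=` U `|` V -> C `&` U `&` V = set0 ->
    C `&` U = set0 \/ C `&` V = set0.

Definition Zcomponent (R : comPzRingType) (p : Spec R) : set (Spec R) :=
  fun q => exists C, Zconnected C /\ C p /\ C q.

Definition pi0 (R : comPzRingType) :=
  {C : set (Spec R) | exists p, C = Zcomponent p}.

Definition pi0_of (R : comPzRingType) (p : Spec R) : pi0 R :=
  exist _ (Zcomponent p) (ex_intro _ p erefl).

Definition pi0_open (R : comPzRingType) (V : set (pi0 R)) : Prop :=
  Zopen (@pi0_of R @^-1` V).

Definition pi0_continuous (R : comPzRingType) (X : topologicalType) (q : X -> pi0 R) : Prop :=
  forall V, pi0_open V -> open (q @^-1` V).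

Definition closed_point (R : comPzRingType) (p : Spec R) : Prop := Zclosed [set p].

Definition wlocal (R : comPzRingType) : Prop :=
  Zclosed (@closed_point R) /\
  forall c : pi0 R, exists! p : Spec R, sval c p /\ closed_point p.

Definition compactly_generated_hausdorff (X : topologicalType) : Prop :=
  hausdorff_space X /\
  forall A : set X, (forall K : set X, compact K -> closed (A `&` K)) -> closed A.

(** * Relative Betti stack
   For an R-algebra (S, f : R -> S), X^{B/R}(S) is the set of continuous maps
   phi : |Spec S| -> X over pi_0 |Spec R|, i.e. with q o phi = pi_0_of o Spec(f). *)
Definition relBetti (R : comPzRingType) (X : topologicalType) (q : X -> pi0 R)
  (S : comPzRingType) (f : {rmorphism R -> S}) (phi : Spec S -> X) : Prop :=
  Zcontinuous phi /\ forall p : Spec S, q (phi p) = pi0_of (specmap f p).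

(** A morphism of stacks X^{B/R} -> Y^{B/R} (these are set-valued sheaves, so a
   morphism is a natural transformation of functors on R-algebras). *)
Definition betti_morphism (R : comPzRingType) (X Y : topologicalType)
  (qX : X -> pi0 R) (qY : Y -> pi0 R)
  (eta : forall (S : comPzRingType) (f : {rmorphism R -> S}), (Spec S -> X) -> (Spec S -> Y))
  : Prop :=
  (forall S f phi, relBetti qX f phi -> relBetti qY f (eta S f phi)) /\
  (forall (S1 S2 : comPzRingType) (f1 : {rmorphism R -> S1}) (f2 : {rmorphism R -> S2})
          (h : {rmorphism S1 -> S2}),
     (forall r, h (f1 r) = f2 r) ->
     forall phi, relBetti qX f1 phi ->
       eta S2 f2 (phi \o specmap h) = eta S1 f1 phi \o specmap h).

(* Let [m] be the closed point of the component of [x : X] in [|Spec R|].  The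
   constant map [|Spec R/m| -> X] with value [x] is a point of [X^{B/R}], and
   since every prime [P] of an [R]-algebra [S] is reached from such points by
   the maps [R/p -> S/P <- S] (with [p] the contraction of [P]) and
   [R/p -> R/m], naturality forces a morphism [eta] to be
   [phi |-> g o phi] for [g x := eta (cst x) (generic point of R/m)].  This
   gives faithfulness, and fullness up to continuity of [g].  Since [X] is
   compactly generated, it suffices to test continuity on a compact [K].  The
   functions [K -> R] modulo those taking values in the closed points form an
   [R]-algebra whose primes give ultrafilters on [K]; sending a prime to the
   limit of its ultrafilter is continuous and lies over [pi0], because the
   components of a spectrum are cut out by idempotents.  Applying [eta] to
   this map, and using the prime of any ultrafilter converging to a point of
   [K], shows that [g] is continuous on [K]. *)

From HB Require Import structures.
From mathcomp Require Import all_boot all_algebra.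
From mathcomp Require Import boolp classical_sets topology.
From mathcomp Require Import generic_quotient ring functions numfun.
Set Implicit Arguments. Unset Strict Implicit. Unset Printing Implicit Defensive.
Import GRing.Theory.
Local Open Scope classical_set_scope.
Local Open Scope ring_scope.
Local Open Scope quotient_scope.

(** * Ideals and quotient rings *)

Definition ideal (S : comPzRingType) (I : set S) : Prop :=
  [/\ I 0, (forall a b, I a -> I b -> I (a + b)) & (forall a b, I b -> I (a * b))].

Section IdealTheory.
Variables (S : comPzRingType) (I : set S).
Hypothesis hI : ideal I.

Lemma ideal0 : I 0. Proof. by case: hI. Qed.
Lemma idealD a b : I a -> I b -> I (a + b). Proof. by case: hI => _ + _; apply. Qed.
Lemma idealMl a b : I b -> I (a * b). Proof. by case: hI => _ _; apply. Qed.
Lemma idealMr a b : I a -> I (a * b). Proof. by rewrite mulrC; apply: idealMl. Qed.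
Lemma idealN a : I a -> I (- a). Proof. by rewrite -mulN1r; apply: idealMl. Qed.
Lemma idealB a b : I a -> I b -> I (a - b).
Proof. by move=> Ia Ib; apply: idealD => //; apply: idealN. Qed.

End IdealTheory.

Section QuotientRing.
Variables (S : comPzRingType) (I : set S) (hI : ideal I).

Definition quot_equiv (x y : S) : bool := `[< I (x - y) >].

Lemma quot_equivP x y : reflect (I (x - y)) (quot_equiv x y).
Proof. exact: asboolP. Qed.

Lemma quot_equiv_is_equiv : equiv_class_of quot_equiv.
Proof.
split=> [x|x y|y x z].
- by apply/quot_equivP; rewrite subrr; apply: ideal0.
- by apply/idP/idP => /quot_equivP h; apply/quot_equivP; rewrite -opprB; apply: idealN.
- move=> /quot_equivP h1 /quot_equivP h2; apply/quot_equivP.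
  have -> : x - z = (x - y) + (y - z) by rewrite addrA addrNK.
  exact: idealD.
Qed.

Canonical quot_equiv_equiv := EquivRelPack quot_equiv_is_equiv.
Canonical quot_equiv_encModRel := defaultEncModRel quot_equiv.

(* Mentioning [hI] in the carrier lets the ring instances below depend on it. *)
Definition quot := (fun _ : ideal I => {eq_quot quot_equiv}) hI.
HB.instance Definition _ : EqQuotient S quot_equiv quot := EqQuotient.on quot.
HB.instance Definition _ := Choice.on quot.

Lemma quot_eqmodP x y : reflect (I (x - y)) (x == y %[mod quot]).
Proof. by rewrite piE; exact: quot_equivP. Qed.

Lemma quot_reprP x : I (repr (\pi_quot x) - x).
Proof. by apply/quot_eqmodP; rewrite reprK. Qed.

Definition quot_zero : quot := lift_cst quot 0.
Definition quot_add := lift_op2 quot +%R.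
Definition quot_opp := lift_op1 quot -%R.
Definition quot_one : quot := lift_cst quot 1.
Definition quot_mul := lift_op2 quot *%R.

Canonical qpi_zero_morph := PiConst quot_zero.
Canonical qpi_one_morph := PiConst quot_one.

Lemma quot_pi_opp : {morph \pi : x / - x >-> quot_opp x}.
Proof.
by move=> x; unlock quot_opp; apply/eqP/quot_eqmodP; rewrite opprK addrC; exact: quot_reprP.
Qed.
Canonical qpi_opp_morph := PiMorph1 quot_pi_opp.

Lemma quot_pi_add : {morph \pi : x y / x + y >-> quot_add x y}.
Proof.
move=> x y /=; unlock quot_add; apply/eqP/quot_eqmodP.
set a := repr (\pi_quot x); set b := repr (\pi_quot y).
have -> : x + y - (a + b) = - ((a - x) + (b - y)) by ring.
by apply: (idealN hI); apply: (idealD hI); exact: quot_reprP.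
Qed.
Canonical qpi_add_morph := PiMorph2 quot_pi_add.

Lemma quot_pi_mul : {morph \pi : x y / x * y >-> quot_mul x y}.
Proof.
move=> x y; unlock quot_mul; apply/eqP/quot_eqmodP.
set a := repr (\pi_quot x); set b := repr (\pi_quot y).
have -> : x * y - a * b = - ((a - x) * y + a * (b - y)) by ring.
apply: (idealN hI); apply: (idealD hI); [apply: (idealMr hI) | apply: (idealMl hI)].
all: exact: quot_reprP.
Qed.
Canonical qpi_mul_morph := PiMorph2 quot_pi_mul.

Lemma quot_addA : associative quot_add.
Proof. by move=> x y z; rewrite -[x]reprK -[y]reprK -[z]reprK !piE addrA. Qed.
Lemma quot_addC : commutative quot_add.
Proof. by move=> x y; rewrite -[x]reprK -[y]reprK !piE addrC. Qed.
Lemma quot_add0 : left_id quot_zero quot_add.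
Proof. by move=> x; rewrite -[x]reprK !piE add0r. Qed.
Lemma quot_addN : left_inverse quot_zero quot_opp quot_add.
Proof. by move=> x; rewrite -[x]reprK !piE addNr. Qed.

HB.instance Definition _ := GRing.isZmodule.Build quot quot_addA quot_addC quot_add0 quot_addN.

Lemma quot_mulA : associative quot_mul.
Proof. by move=> x y z; rewrite -[x]reprK -[y]reprK -[z]reprK !piE mulrA. Qed.
Lemma quot_mulC : commutative quot_mul.
Proof. by move=> x y; rewrite -[x]reprK -[y]reprK !piE mulrC. Qed.
Lemma quot_mul1 : left_id quot_one quot_mul.
Proof. by move=> x; rewrite -[x]reprK !piE mul1r. Qed.
Lemma quot_mulDl : left_distributive quot_mul +%R.
Proof.
move=> x y z; rewrite -[x]reprK -[y]reprK -[z]reprK.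
by apply/eqP; rewrite piE /= mulrDl equiv_refl.
Qed.

HB.instance Definition _ :=
  GRing.Zmodule_isComPzRing.Build quot quot_mulA quot_mulC quot_mul1 quot_mulDl.

Definition qpi (x : S) : quot := \pi_quot x.

Lemma qpi_zmod : zmod_morphism qpi.
Proof. by move=> x y; rewrite /qpi !piE. Qed.
HB.instance Definition _ := GRing.isZmodMorphism.Build S quot qpi qpi_zmod.
Lemma qpi_monoid : monoid_morphism qpi.
Proof. by split=> [|x y]; rewrite /qpi !piE. Qed.
HB.instance Definition _ := GRing.isMonoidMorphism.Build S quot qpi qpi_monoid.

End QuotientRing.

Section QuotientTheory.
Variables (S : comPzRingType) (I : set S) (hI : ideal I).

Lemma qpi_eq0 x : qpi hI x = 0 <-> I x.
Proof.
rewrite -(rmorph0 (qpi hI)); split=> [/eqP/(quot_eqmodP hI)|Ix]; first by rewrite subr0.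
by apply/eqP/(quot_eqmodP hI); rewrite subr0.
Qed.

Lemma qpiK (y : quot hI) : qpi hI (repr y) = y.
Proof. exact: reprK. Qed.

Lemma qpi_reprB x : I (repr (qpi hI x) - x).
Proof. exact: quot_reprP. Qed.

End QuotientTheory.

Section SpecPoint.
Variables (S : comPzRingType) (p : Spec S).
Local Notation P := (sval p).

Lemma spec_ideal : ideal P. Proof. by case: (svalP p). Qed.
Lemma spec0 : P 0. Proof. exact: (ideal0 spec_ideal). Qed.
Lemma specD x y : P x -> P y -> P (x + y). Proof. exact: (idealD spec_ideal). Qed.
Lemma specM r x : P x -> P (r * x). Proof. exact: (idealMl spec_ideal). Qed.
Lemma specMr r x : P x -> P (x * r). Proof. exact: (idealMr spec_ideal). Qed.
Lemma specB x y : P x -> P y -> P (x - y). Proof. exact: (idealB spec_ideal). Qed.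
Lemma spec1F : ~ P 1. Proof. by case: (svalP p). Qed.
Lemma specP x y : P (x * y) -> P x \/ P y. Proof. by case: (svalP p) => _ _ _ _; apply. Qed.

Lemma spec_compl x : P x -> ~ P (1 - x).
Proof. by move=> Px P1x; have := specD P1x Px; rewrite subrK; exact: spec1F. Qed.

Lemma spec_idem e : e * e = e -> P e \/ P (1 - e).
Proof. by move=> ee; apply: specP; rewrite mulrBr mulr1 ee subrr; exact: spec0. Qed.

End SpecPoint.

Lemma spec_eq (S : comPzRingType) (p q : Spec S) : sval p = sval q -> p = q.
Proof. by case: p q => P hP [Q hQ] /= PQ; apply: eq_exist. Qed.

Definition ideal_sum (S : comPzRingType) (I J : set S) : set S :=
  [set z | exists a b, [/\ I a, J b & z = a + b]].

Lemma ideal_sum_ideal (S : comPzRingType) (I J : set S) :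
  ideal I -> ideal J -> ideal (ideal_sum I J).
Proof.
move=> hI hJ; split.
- by exists 0, 0; split; [exact: ideal0 | exact: ideal0 | rewrite addr0].
- move=> _ _ [a1 [b1 [Ia1 Jb1 ->]]] [a2 [b2 [Ia2 Jb2 ->]]].
  by exists (a1 + a2), (b1 + b2); split; [exact: idealD | exact: idealD | rewrite addrACA].
- move=> c _ [a [b [Ia Jb ->]]]; exists (c * a), (c * b).
  by split; [exact: idealMl | exact: idealMl | rewrite mulrDr].
Qed.

Lemma ideal_suml (S : comPzRingType) (I J : set S) : ideal J -> I `<=` ideal_sum I J.
Proof. by move=> hJ a Ia; exists a, 0; split => //; [exact: ideal0 | rewrite addr0]. Qed.

Lemma ideal_sumr (S : comPzRingType) (I J : set S) : ideal I -> J `<=` ideal_sum I J.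
Proof. by move=> hI b Jb; exists 0, b; split => //; [exact: ideal0 | rewrite add0r]. Qed.

Definition principal_ideal (S : comPzRingType) (x : S) : set S := [set z | exists r, z = r * x].

Lemma principal_ideal_ideal (S : comPzRingType) (x : S) : ideal (principal_ideal x).
Proof.
split; first by exists 0; rewrite mul0r.
- by move=> _ _ [r ->] [s ->]; exists (r + s); rewrite mulrDl.
- by move=> a _ [r ->]; exists (a * r); rewrite mulrA.
Qed.

Lemma principal_ideal_id (S : comPzRingType) (x : S) : principal_ideal x x.
Proof. by exists 1; rewrite mul1r. Qed.

Section PrimeAvoidingPowers.
Variables (S : comPzRingType) (J : set S) (a : S).

Definition avoiding_ideal (M : set S) := [/\ ideal M, J `<=` M & forall n, ~ M (a ^+ n)].

Definition max_avoiding_ideal (M : set S) :=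
  avoiding_ideal M /\ forall B, avoiding_ideal B -> M `<=` B -> B = M.

Lemma exists_max_avoiding_ideal : avoiding_ideal J -> exists M, max_avoiding_ideal M.
Proof.
move=> aJ; have [hJ _ _] := aJ.
(* [Zorn_bigcup] also sees the empty chain, whose union is [set0]. *)
pose P (A : set S) := A = set0 \/ avoiding_ideal A.
have [A [PA Amax]] : exists A, P A /\ forall B, A `<` B -> ~ P B.
  apply: Zorn_bigcup => F FP Ftot.
  have [[A0 [FA0 [x0 A0x0]]]|F0] := pselect (exists A, F A /\ A !=set0); last first.
    left; apply/seteqP; split => // x [A FA Ax]; apply: F0; exists A; split => //; by exists x.
  right; have aF A : F A -> A !=set0 -> avoiding_ideal A.
    by move=> FA [x Ax]; case: (FP A FA) => // eA; rewrite eA in Ax.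
  have [hA0 JA0 _] := aF _ FA0 (ex_intro _ x0 A0x0).
  have common A B x y : F A -> F B -> A x -> B y -> exists C, [/\ F C, ideal C, C x & C y].
    move=> FA FB Ax By; have [AB|BA] := Ftot A B FA FB.
    + by have [hB _ _] := aF B FB (ex_intro _ y By); exists B; split => //; exact: AB.
    + by have [hA _ _] := aF A FA (ex_intro _ x Ax); exists A; split => //; exact: BA.
  split; [split|move=> x /JA0 A0x; by exists A0|].
  - by exists A0 => //; exact: ideal0.
  - move=> x y [A FA Ax] [B FB By]; have [C [FC hC Cx Cy]] := common _ _ _ _ FA FB Ax By.
    by exists C => //; apply: idealD.
  - move=> x y [A FA Ay]; have [C [FC hC Cy _]] := common _ _ _ _ FA FA Ay Ay.
    by exists C => //; apply: idealMl.
  - by move=> n [C FC Cn]; have [_ _ /(_ n)] := aF C FC (ex_intro _ _ Cn).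
have aA : avoiding_ideal A.
  case: PA => // A0; exfalso; apply: (Amax J); last by right.
  by rewrite A0; split => // /(_ 0 (ideal0 hJ)).
exists A; split => // B aB AB; apply/seteqP; split => //.
by apply: contrapT => BA; apply: (Amax B); [split | right].
Qed.

Lemma max_avoiding_prime M : max_avoiding_ideal M -> prime_ideal M.
Proof.
move=> [[hM JM Ma] Mmax]; split; [exact: ideal0 | exact: idealD | exact: idealMl | |].
  by move=> M1; apply: (Ma 0%N); rewrite expr0.
have power_mod z : ~ M z -> exists n m r, M m /\ a ^+ n = m + r * z.
  move=> Mz; apply: contrapT => nopow.
  have aMz : avoiding_ideal (ideal_sum M (principal_ideal z)).
    split; [exact/ideal_sum_ideal/principal_ideal_ideal | |].
      by move=> u /JM; apply: ideal_suml; exact: principal_ideal_ideal.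
    by move=> n [m [_ [Mm [r ->] e]]]; apply: nopow; exists n, m, r.
  apply: Mz; rewrite -(Mmax _ aMz); last exact/ideal_suml/principal_ideal_ideal.
  exact/(ideal_sumr hM)/principal_ideal_id.
move=> x y Mxy; apply: contrapT => /not_orP [Mx My].
have [n [m1 [r1 [Mm1 e1]]]] := power_mod x Mx.
have [k [m2 [r2 [Mm2 e2]]]] := power_mod y My.
apply: (Ma (n + k)%N); rewrite exprD e1 e2.
have -> : (m1 + r1 * x) * (m2 + r2 * y) =
   m1 * (m2 + r2 * y) + (r1 * x) * m2 + (r1 * r2) * (x * y) by ring.
apply: (idealD hM); last exact: (idealMl hM).
by apply: (idealD hM); [apply: (idealMr hM) | apply: (idealMl hM)].
Qed.

End PrimeAvoidingPowers.

Lemma exists_prime_avoiding (S : comPzRingType) (J : set S) (a : S) :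
  ideal J -> (forall n, ~ J (a ^+ n)) -> exists p : Spec S, J `<=` sval p /\ ~ sval p a.
Proof.
move=> hJ Ja; have [M maxM] := exists_max_avoiding_ideal (And3 hJ (@subset_refl _ J) Ja).
exists (exist _ M (max_avoiding_prime maxM)) => /=; have [[_ JM Ma] _] := maxM.
by split => // Ma1; apply: (Ma 1%N); rewrite expr1.
Qed.

Lemma exists_closed_point_above (S : comPzRingType) (p : Spec S) :
  exists m : Spec S, sval p `<=` sval m /\ closed_point m.
Proof.
have p1 n : ~ sval p (1 ^+ n) by rewrite expr1n; exact: spec1F.
have [M maxM] := exists_max_avoiding_ideal (And3 (spec_ideal p) (@subset_refl _ _) p1).
set m := exist _ M (max_avoiding_prime maxM); have [[_ pM _] Mmax] := maxM.
exists m; split => // q /= qm.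
have /nonsubset [b [Mb qb]] : ~ (M `<=` sval q).
  move=> Mq; apply: qm; apply: spec_eq; apply: Mmax => //.
  split; [exact: spec_ideal | exact: subset_trans Mq | move=> n; rewrite expr1n; exact: spec1F].
by exists b; split => // q' q'b /= q'm; apply: q'b; rewrite q'm.
Qed.

Lemma ZopenD (S : comPzRingType) (a : S) : Zopen [set p : Spec S | ~ sval p a].
Proof. by move=> p pa; exists a. Qed.

Lemma Zcontinuous_cst (S : comPzRingType) (X : topologicalType) (x : X) :
  Zcontinuous (fun _ : Spec S => x).
Proof. by move=> A _ p Ax; exists 1; split => //; exact: spec1F. Qed.

Lemma Zopen_generization (S : comPzRingType) (U : set (Spec S)) (p q : Spec S) :
  Zopen U -> sval p `<=` sval q -> U q -> U p.
Proof. by move=> oU pq /oU [a [qa aU]]; apply: aU => /pq. Qed.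

Lemma Zcontinuous_specialize (S : comPzRingType) (Y : topologicalType) (F : Spec S -> Y) :
  hausdorff_space Y -> Zcontinuous F -> forall p q : Spec S, sval p `<=` sval q -> F q = F p.
Proof.
move=> hY cF p q pq; apply: contrapT => /eqP Fqp.
move: hY; rewrite open_hausdorff => /(_ _ _ Fqp) [[W1 W2] /=].
rewrite !in_setE => -[W1q W2p] [oW1 oW2 /eqP W12].
have W1p : W1 (F p) := Zopen_generization (cF _ oW1) pq W1q.
by move/eqP/disjoints_subset: W12 => /(_ _ W1p).
Qed.

Section Components.
Variable (R : comPzRingType).
Implicit Types (p q : Spec R) (C U V : set (Spec R)).

Lemma Zconnected_side C D U V z : Zconnected C -> C `<=` D -> Zopen U -> Zopen V ->
  D `<=` U `|` V -> D `&` U `&` V = set0 -> C z -> U z -> C `&` V = set0.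
Proof.
move=> cC CD oU oV DUV DUV0 Cz Uz; case: (cC U V) => //.
- by move=> x /CD /DUV.
- apply/disjoints_subset => x [Cx Ux]; move/disjoints_subset: DUV0; apply.
  by split => //; exact: CD.
- by move/disjoints_subset => /(_ z Cz).
Qed.

Lemma Zconnected1 p : Zconnected [set p].
Proof.
move=> U V _ _ cov disj; have [Up|Vp] := cov p erefl; [right|left].
- by apply/disjoints_subset => _ ->; move/disjoints_subset: disj; apply.
- by rewrite setIAC in disj; apply/disjoints_subset => _ ->; move/disjoints_subset: disj; apply.
Qed.

Lemma ZconnectedU C1 C2 z : Zconnected C1 -> Zconnected C2 -> C1 z -> C2 z ->
  Zconnected (C1 `|` C2).
Proof.
move=> c1 c2 C1z C2z U V oU oV cov disj.
have sub1 : C1 `<=` C1 `|` C2 by move=> x; left.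
have sub2 : C2 `<=` C1 `|` C2 by move=> x; right.
have [Uz|Vz] := cov z (sub1 _ C1z); [right|left]; rewrite setIUl.
- by rewrite (Zconnected_side c1 sub1 oU oV cov disj C1z Uz)
    (Zconnected_side c2 sub2 oU oV cov disj C2z Uz) setU0.
- rewrite [U `|` V]setUC in cov; rewrite setIAC in disj.
  by rewrite (Zconnected_side c1 sub1 oV oU cov disj C1z Vz)
    (Zconnected_side c2 sub2 oV oU cov disj C2z Vz) setU0.
Qed.

Lemma Zcomponent_refl p : Zcomponent p p.
Proof. by exists [set p]; split; [exact: Zconnected1 |]. Qed.

Lemma Zcomponent_sym p q : Zcomponent p q -> Zcomponent q p.
Proof. by case=> C [cC [Cp Cq]]; exists C. Qed.

Lemma Zcomponent_trans p q r : Zcomponent p q -> Zcomponent q r -> Zcomponent p r.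
Proof.
case=> C [cC [Cp Cq]] [D [cD [Dq Dr]]]; exists (C `|` D).
by split; [exact: ZconnectedU cC cD Cq Dq | split; [left | right]].
Qed.

Lemma pi0_of_eq p q : Zcomponent p q -> pi0_of p = pi0_of q.
Proof.
move=> pq; apply: eq_exist; apply/seteqP; split => r.
  exact: Zcomponent_trans (Zcomponent_sym pq).
exact: Zcomponent_trans pq.
Qed.

Lemma pi0_of_mem p : sval (pi0_of p) p.
Proof. exact: Zcomponent_refl. Qed.

Lemma pi0_ofE (c : pi0 R) p : sval c p -> pi0_of p = c.
Proof. by case: c => C [p0 e] /= Cp; subst C; rewrite -(pi0_of_eq Cp); exact: eq_exist. Qed.

Lemma Zconnected_specializations p : Zconnected [set q | sval p `<=` sval q].
Proof.
have pp : sval p `<=` sval p by [].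
move=> U V oU oV cov disj; have [Up|Vp] := cov p pp; [right|left].
- apply/disjoints_subset => q pq Vq; move/disjoints_subset: disj => /(_ p).
  by apply; [split | exact: Zopen_generization oV pq Vq].
- apply/disjoints_subset => q pq Uq; rewrite setIAC in disj.
  move/disjoints_subset: disj => /(_ p).
  by apply; [split | exact: Zopen_generization oU pq Uq].
Qed.

Lemma pi0_of_specialize p q : sval p `<=` sval q -> pi0_of q = pi0_of p.
Proof.
move=> pq; apply/esym/pi0_of_eq.
by exists [set r | sval p `<=` sval r]; split; [exact: Zconnected_specializations | split].
Qed.

Lemma Zcomponent_idem p q (e : R) : e * e = e -> Zcomponent p q -> sval p e -> sval q e.
Proof.
move=> ee [C [cC [Cp Cq]]] pe; apply: contrapT => qe.
case: (cC [set r | ~ sval r e] [set r | ~ sval r (1 - e)] (@ZopenD _ e) (@ZopenD _ (1 - e))).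
- move=> r _; have [re|r1e] := spec_idem r ee; [right | left].
    exact: spec_compl re.
  by move=> /spec_compl; apply.
- apply/disjoints_subset => r [_ re] r1e.
  by have [|] := spec_idem r ee.
- by move/disjoints_subset => /(_ q Cq).
- by move/disjoints_subset => /(_ p Cp); apply => /(spec_compl pe).
Qed.

Lemma Zcomponent_idemE p q (e : R) : e * e = e -> Zcomponent p q -> (sval p e <-> sval q e).
Proof. by move=> ee pq; split; apply: Zcomponent_idem => //; exact: Zcomponent_sym. Qed.

End Components.

(** * Components are cut out by idempotents *)

Section IdempotentAlgebra.
Variable (S : comPzRingType).
Implicit Types (a b s t u x y A B : S).

Lemma idemC u : u * u = u -> (1 - u) * (1 - u) = 1 - u.
Proof. by move=> uu; rewrite mulrBr mulr1 mulrBl mul1r uu subrr subr0. Qed.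

Lemma idemM u v : u * u = u -> v * v = v -> (u * v) * (u * v) = u * v.
Proof. by move=> uu vv; rewrite mulrACA uu vv. Qed.

Lemma comaximal_powl x y s t n : s * x + t * y = 1 -> exists s' t', s' * x ^+ n + t' * y = 1.
Proof.
move=> e; elim: n => [|n [s' [t' e']]]; first by exists 1, 0; rewrite expr0 mul0r addr0 mulr1.
exists (s' * s), (s' * x ^+ n * t + t').
have -> : s' * s * x ^+ n.+1 + (s' * x ^+ n * t + t') * y =
  s' * x ^+ n * (s * x + t * y) + t' * y by rewrite exprSr; ring.
by rewrite e mulr1.
Qed.

Lemma comaximalX a b n : a + b = 1 -> exists s t, s * a ^+ n + t * b ^+ n = 1.
Proof.
move=> ab1; have [s [t e]] := @comaximal_powl a b 1 1 n ltac:(by rewrite !mul1r).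
have [t' [s' e']] := @comaximal_powl b (a ^+ n) t s n ltac:(by rewrite addrC).
by exists s', t'; rewrite addrC.
Qed.

Lemma idem_of_comaximal A B u : A + B = 1 -> u * u = u -> A * B * u = A * B ->
  (A * (1 - u)) * (A * (1 - u)) = A * (1 - u).
Proof.
move=> AB1 uu ABu; rewrite mulrACA (idemC uu).
have -> : A * A = A - A * B by rewrite -[A in A - _]mulr1 -AB1 mulrDr addrK.
by rewrite mulrBl [A * B * _]mulrBr ABu mulr1 subrr subr0.
Qed.

End IdempotentAlgebra.

Definition zero_locus (S : comPzRingType) (I : set S) : set (Spec S) :=
  [set r | I `<=` sval r].

Definition vanishing (S : comPzRingType) (A : set (Spec S)) : set S :=
  [set x | forall r, A r -> sval r x].

Lemma vanishing_ideal (S : comPzRingType) (A : set (Spec S)) : ideal (vanishing A).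
Proof.
split; first by move=> r _; exact: spec0.
- by move=> a b va vb r Ar; apply: specD; [exact: va | exact: vb].
- by move=> a b vb r Ar; apply: specM; exact: vb.
Qed.

Lemma vanishing_zero_locus_pow (S : comPzRingType) (I : set S) x :
  ideal I -> vanishing (zero_locus I) x -> exists n, I (x ^+ n).
Proof.
move=> hI van; apply: contrapT => /forallNP nI.
by have [r [Ir rx]] := exists_prime_avoiding hI nI; exact: rx (van r Ir).
Qed.

Lemma zero_locus_split_comaximal (S : comPzRingType) (I : set S) (U V : set (Spec S)) :
  ideal I -> Zopen U -> Zopen V ->
  zero_locus I `<=` U `|` V -> zero_locus I `&` U `&` V = set0 ->
  exists a b,
    [/\ vanishing (zero_locus I `&` U) a, vanishing (zero_locus I `&` V) b & a + b = 1].
Proof.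
move=> hI oU oV cov disj; set Z := zero_locus I.
have separate W1 W2 : Zopen W1 -> Z `&` W1 `&` W2 = set0 ->
    forall r, W1 r -> exists c, ~ sval r c /\ vanishing (Z `&` W2) c.
  move=> oW1 d r W1r; have [c [rc cW1]] := oW1 r W1r; exists c; split => // r' [Zr' W2r'].
  apply: contrapT => r'c; move/disjoints_subset: d => /(_ r').
  by apply => //; split => //; exact: cW1.
set K := ideal_sum (vanishing (Z `&` U)) (vanishing (Z `&` V)).
have hK : ideal K := ideal_sum_ideal (vanishing_ideal _) (vanishing_ideal _).
apply: contrapT => nocomax.
have [r [Kr _]] : exists r : Spec S, K `<=` sval r /\ ~ sval r 1.
  apply: exists_prime_avoiding hK _ => n.
  by rewrite expr1n => -[a [b [? ? ab1]]]; apply: nocomax; exists a, b.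
have Zr : Z r.
  by move=> x Ix; apply/Kr/ideal_suml; [exact: vanishing_ideal | move=> r' [Zr' _]; exact: Zr'].
have [Ur|Vr] := cov r Zr.
- have [c [rc cV]] := separate U V oU disj r Ur.
  by apply/rc/Kr/ideal_sumr; [exact: vanishing_ideal | exact: cV].
- rewrite setIAC in disj; have [c [rc cU]] := separate V U oV disj r Vr.
  by apply/rc/Kr/ideal_suml; [exact: vanishing_ideal | exact: cU].
Qed.

Section IdempotentIdeal.
Variables (R : comPzRingType) (p : Spec R).

(* The ideal generated by the idempotents of [p]. *)
Definition idem_ideal : set R := [set x | exists u, [/\ u * u = u, sval p u & x * u = x]].

Lemma idem_ideal_ideal : ideal idem_ideal.
Proof.
split; first by exists 0; rewrite mulr0; split => //; exact: spec0.
- move=> a b [u [uu pu au]] [v [vv pv bv]]; exists (u + v - u * v); split.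
  + have -> : u + v - u * v = 1 - (1 - u) * (1 - v) by ring.
    by apply/idemC/idemM; exact: idemC.
  + by apply: specB; [apply: specD | apply: specMr].
  + have -> : (a + b) * (u + v - u * v) =
       a * u + a * v - (a * u) * v + b * v + b * u - (b * v) * u by ring.
    by rewrite au bv; ring.
- by move=> a b [u [uu pu bu]]; exists u; split => //; rewrite -mulrA bu.
Qed.

Lemma idem_idealE u : u * u = u -> sval p u -> idem_ideal u.
Proof. by move=> uu pu; exists u. Qed.

Lemma idem_ideal_sub (q : Spec R) :
  (forall e, e * e = e -> sval p e -> sval q e) -> idem_ideal `<=` sval q.
Proof. by move=> pq x [u [uu pu <-]]; apply/specM/pq. Qed.

(* Splitting [V(I)] into two opens gives [a + b = 1] with [a b] nilpotent mod
   [I]; lifting yields an idempotent [e] in some [q1] but not in some [q2] of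
   [V(I)], while [p] contains [e] or [1 - e], hence so do [q1] and [q2]. *)
Lemma Zconnected_zero_locus_idem : Zconnected (zero_locus idem_ideal).
Proof.
move=> U V oU oV cov disj.
apply: contrapT => /not_orP [/eqP/set0P [q1 [Z1 U1]] /eqP/set0P [q2 [Z2 V2]]].
have hI := idem_ideal_ideal.
have [a [b [aU bV ab1]]] := zero_locus_split_comaximal hI oU oV cov disj.
have [n abn] : exists n, idem_ideal ((a * b) ^+ n.+1).
  have [|n abn] := vanishing_zero_locus_pow (x := a * b) hI.
    by move=> r Zr; have [Ur|Vr] := cov r Zr; [apply/specMr/aU | apply/specM/bV].
  by exists n; rewrite exprSr; exact: idealMr.
have [s [t st1]] := comaximalX n.+1 ab1.
set A := s * a ^+ n.+1 in st1; set B := t * b ^+ n.+1 in st1.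
have [u [uu pu ABu]] : idem_ideal (A * B).
  have -> : A * B = (s * t) * (a * b) ^+ n.+1 by rewrite /A /B exprMn; ring.
  exact: (idealMl hI).
have ee := idem_of_comaximal st1 uu ABu; set e := A * (1 - u) in ee.
have q1e : sval q1 e by rewrite /e /A exprS; apply/specMr/specM/specMr/aU.
have q2B : sval q2 B by rewrite /B exprS; apply/specM/specMr/bV.
have q2A : ~ sval q2 A by move=> q2A; have := specD q2A q2B; rewrite st1; exact: spec1F.
have q2u : sval q2 u by apply: Z2; exact: idem_idealE.
have q2e : ~ sval q2 e by case/specP => //; exact: spec_compl q2u.
have [pe|p1e] := spec_idem p ee.
- by apply: q2e; apply: Z2; exact: idem_idealE.
- by apply: (spec_compl q1e); apply: Z1; apply: idem_idealE p1e; exact: idemC.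
Qed.

End IdempotentIdeal.

Lemma Zcomponent_idemP (R : comPzRingType) (p q : Spec R) :
  Zcomponent p q <-> forall e : R, e * e = e -> (sval p e <-> sval q e).
Proof.
split=> [pq e ee|same]; first exact: Zcomponent_idemE.
exists (zero_locus (idem_ideal p)); split; first exact: Zconnected_zero_locus_idem.
by split; apply: idem_ideal_sub => // e ee /(same e ee).
Qed.

Section QuotientSpec.
Variables (S : comPzRingType) (J : set S) (hJ : ideal J).
Local Notation qpi := (qpi hJ).

Lemma qpi_repr_mem (P : Spec S) x : J `<=` sval P -> (sval P (repr (qpi x)) <-> sval P x).
Proof.
move=> JP; have d := JP _ (qpi_reprB hJ x).
split=> h; first by rewrite -(subKr (repr (qpi x)) x); apply: specB.
by rewrite -(subrK x (repr _)); apply: specD.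
Qed.

Lemma quot_prime (P : Spec S) : J `<=` sval P -> prime_ideal [set y : quot hJ | sval P (repr y)].
Proof.
move=> JP; have mem x := qpi_repr_mem x JP.
have E (y : quot hJ) : y = qpi (repr y) by rewrite qpiK.
split => /=.
- by rewrite -(rmorph0 qpi) mem; exact: spec0.
- by move=> a b; rewrite (E a) (E b) -rmorphD !mem; exact: specD.
- by move=> a b; rewrite (E a) (E b) -rmorphM !mem; exact: specM.
- by rewrite -(rmorph1 qpi) mem; exact: spec1F.
- by move=> a b; rewrite (E a) (E b) -rmorphM !mem; exact: specP.
Qed.

Definition quot_pt (P : Spec S) (JP : J `<=` sval P) : Spec (quot hJ) :=
  exist _ _ (quot_prime JP).

Lemma specmap_quot_pt (P : Spec S) (JP : J `<=` sval P) : specmap qpi (quot_pt JP) = P.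
Proof. by apply: spec_eq; apply/seteqP; split => x /qpi_repr_mem; apply. Qed.

Lemma specmap_qpi_sup (Q : Spec (quot hJ)) : J `<=` sval (specmap qpi Q).
Proof. by move=> x /(qpi_eq0 hJ) /= ->; exact: spec0. Qed.

Lemma quot_pt_sub (P : Spec S) (JP : J `<=` sval P) (Q : Spec (quot hJ)) :
  sval P `<=` sval (specmap qpi Q) -> sval (quot_pt JP) `<=` sval Q.
Proof. by move=> PQ y /PQ /=; rewrite qpiK. Qed.

End QuotientSpec.

Section QuotientLift.
Variables (S T : comPzRingType) (f : {rmorphism S -> T}) (I : set S) (J : set T).
Variables (hI : ideal I) (hJ : ideal J) (fIJ : forall x, I x -> J (f x)).

Definition quot_lift_fun (y : quot hI) : quot hJ := qpi hJ (f (repr y)).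

Lemma quot_lift_funE x : quot_lift_fun (qpi hI x) = qpi hJ (f x).
Proof.
apply/eqP; rewrite -subr_eq0 -!rmorphB; apply/eqP/(qpi_eq0 hJ).
by apply: fIJ; exact: qpi_reprB.
Qed.

Lemma quot_lift_fun_zmod : zmod_morphism quot_lift_fun.
Proof.
move=> a b; rewrite -(qpiK a) -(qpiK b) -rmorphB !quot_lift_funE.
by rewrite !rmorphB.
Qed.
HB.instance Definition _ := GRing.isZmodMorphism.Build _ _ quot_lift_fun quot_lift_fun_zmod.

Lemma quot_lift_fun_monoid : monoid_morphism quot_lift_fun.
Proof.
split=> [|a b]; first by rewrite -(rmorph1 (qpi hI)) quot_lift_funE !rmorph1.
by rewrite -(qpiK a) -(qpiK b) -rmorphM !quot_lift_funE !rmorphM.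
Qed.
HB.instance Definition _ := GRing.isMonoidMorphism.Build _ _ quot_lift_fun quot_lift_fun_monoid.

Definition quot_lift : {rmorphism quot hI -> quot hJ} := quot_lift_fun.

Lemma quot_liftE x : quot_lift (qpi hI x) = qpi hJ (f x).
Proof. exact: quot_lift_funE. Qed.

End QuotientLift.

Arguments quot_lift {S T} f {I J} hI hJ fIJ.

Section ResidueRing.
Variables (S : comPzRingType) (P : Spec S).

Definition residue := quot (spec_ideal P).
Definition residue_pi : {rmorphism S -> residue} := qpi (spec_ideal P).

(* The zero ideal of [S/P]: the generic point of [V(P)]. *)
Definition generic_pt : Spec residue := quot_pt (spec_ideal P) (@subset_refl _ (sval P)).

Lemma specmap_generic_pt : specmap residue_pi generic_pt = P.
Proof. exact: specmap_quot_pt. Qed.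

Lemma generic_pt_min (Q : Spec residue) : sval generic_pt `<=` sval Q.
Proof. exact/quot_pt_sub/specmap_qpi_sup. Qed.

End ResidueRing.

(** * Morphisms of relative Betti stacks *)

Section WLocal.
Variables (R : comPzRingType) (hR : wlocal R).

Lemma exists_closed_pt (c : pi0 R) : exists p : Spec R, sval c p /\ closed_point p.
Proof. by have [p [cp _]] := hR.2 c; exists p. Qed.

Definition closed_pt (c : pi0 R) : Spec R := proj1_sig (cid (exists_closed_pt c)).

Lemma closed_ptP c : sval c (closed_pt c) /\ closed_point (closed_pt c).
Proof. exact: proj2_sig (cid (exists_closed_pt c)). Qed.

Lemma pi0_of_closed_pt c : pi0_of (closed_pt c) = c.
Proof. exact/pi0_ofE/(closed_ptP c).1. Qed.

Lemma spec_sub_closed_pt (p : Spec R) : sval p `<=` sval (closed_pt (pi0_of p)).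
Proof.
have [m [pm clm]] := exists_closed_point_above p.
have cm : sval (pi0_of p) m by rewrite -(pi0_of_specialize pm); exact: pi0_of_mem.
have [m0 [_ uniq]] := hR.2 (pi0_of p).
by rewrite -(uniq _ (closed_ptP _)) (uniq m (conj cm clm)).
Qed.

End WLocal.

Section BettiMorphism.
Variables (R : comPzRingType) (hR : wlocal R) (X Y : topologicalType)
  (qX : X -> pi0 R) (qY : Y -> pi0 R).

Lemma relBetti_cst (P : Spec R) (x : X) : qX x = pi0_of P ->
  relBetti qX (residue_pi P) (fun _ => x).
Proof.
move=> xP; split=> [|Q]; first exact: Zcontinuous_cst.
by rewrite xP; apply/esym/pi0_of_specialize/specmap_qpi_sup.
Qed.

Lemma relBetti_cst_closed_pt (x : X) :
  relBetti qX (residue_pi (closed_pt hR (qX x))) (fun _ => x).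
Proof. by apply: relBetti_cst; rewrite pi0_of_closed_pt. Qed.

Variable eta : forall (S : comPzRingType) (f : {rmorphism R -> S}), (Spec S -> X) -> (Spec S -> Y).
Hypotheses (heta : betti_morphism qX qY eta) (hY : hausdorff_space Y).

Definition induced_map (x : X) : Y :=
  let m := closed_pt hR (qX x) in eta (residue_pi m) (fun _ => x) (generic_pt m).

Lemma eta_cst_natural (S1 S2 : comPzRingType) (f1 : {rmorphism R -> S1})
    (f2 : {rmorphism R -> S2}) (k : {rmorphism S1 -> S2}) (x : X) :
  (forall r, k (f1 r) = f2 r) -> relBetti qX f1 (fun _ => x) ->
  forall Q, eta f2 (fun _ => x) Q = eta f1 (fun _ => x) (specmap k Q).
Proof. by move=> kf rb Q; exact: (congr1 (@^~ Q) (heta.2 _ _ f1 f2 k kf _ rb)). Qed.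

Lemma eta_cst_generic (P : Spec R) (x : X) : qX x = pi0_of P ->
  forall Q, eta (residue_pi P) (fun _ => x) Q = eta (residue_pi P) (fun _ => x) (generic_pt P).
Proof.
move=> xP Q; have [cont _] := heta.1 _ _ _ (relBetti_cst xP).
exact: (Zcontinuous_specialize hY cont (generic_pt_min Q)).
Qed.

Lemma induced_mapE (P : Spec R) (x : X) : qX x = pi0_of P ->
  induced_map x = eta (residue_pi P) (fun _ => x) (generic_pt P).
Proof.
move=> xP; rewrite /induced_map xP; set m := closed_pt hR (pi0_of P).
have Pm : sval P `<=` sval m := @spec_sub_closed_pt _ hR P.
pose l := quot_lift idfun (spec_ideal P) (spec_ideal m) Pm.
rewrite (eta_cst_natural (k := l) _ (relBetti_cst xP)); first exact: eta_cst_generic.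
exact: quot_liftE.
Qed.

Lemma eta_pointwise (S : comPzRingType) (f : {rmorphism R -> S}) (phi : Spec S -> X) :
  hausdorff_space X -> relBetti qX f phi -> forall P, eta f phi P = induced_map (phi P).
Proof.
move=> hX [cont over] P; set x := phi P; set p := specmap f P.
have xp : qX x = pi0_of p := over P.
pose h := residue_pi P.
have phi_cst : phi \o specmap h = fun _ => x.
  by apply: funext => Q /=; apply: (Zcontinuous_specialize hX cont); exact: specmap_qpi_sup.
have eta_h : eta f phi P = eta (h \o f) (fun _ => x) (generic_pt P).
  rewrite -phi_cst (heta.2 _ _ f (h \o f) h (fun r => erefl) phi (conj cont over)) /=.
  by rewrite specmap_generic_pt.
pose k := quot_lift f (spec_ideal p) (spec_ideal P) (fun r pr => pr).
rewrite eta_h (eta_cst_natural (k := k) _ (relBetti_cst xp)); last exact: quot_liftE.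
by rewrite eta_cst_generic // (induced_mapE xp).
Qed.

Lemma qY_induced_map x : qY (induced_map x) = qX x.
Proof.
have [_ over] := heta.1 _ _ _ (relBetti_cst_closed_pt x).
by rewrite /induced_map over specmap_generic_pt pi0_of_closed_pt.
Qed.

End BettiMorphism.

Lemma betti_faithful (R : comPzRingType) (hR : wlocal R) (X Y : topologicalType)
  (qX : X -> pi0 R) (g1 g2 : X -> Y) :
  (forall (S : comPzRingType) (f : {rmorphism R -> S}) (phi : Spec S -> X),
     relBetti qX f phi -> g1 \o phi = g2 \o phi) -> g1 = g2.
Proof.
move=> H; apply: funext => x; set m := closed_pt hR (qX x).
by have /(congr1 (@^~ (generic_pt m))) := H _ _ _ (relBetti_cst_closed_pt hR qX x).
Qed.

(** * Continuity through ultrafilters *)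

Section PrimeUltrafilter.
Variables (I : Type) (R : comPzRingType).

Lemma indicC_add (Z : set I) : \1_Z + \1_(~` Z) = 1 :> (I -> R).
Proof.
apply: funext => i; rewrite /GRing.add /= !indicE in_setC.
by case: (i \in Z); rewrite ?addr0 ?add0r.
Qed.

Lemma indic_subset_mul (Z Z' : set I) : Z `<=` Z' -> \1_Z = \1_Z * \1_Z' :> (I -> R).
Proof. by move=> ZZ'; rewrite -[LHS](congr1 indic (setIidl ZZ')) indicI. Qed.

Variable (P : Spec (I -> R)).

Definition prime_ultra : set_system I := [set Z | ~ sval P \1_Z].

Lemma prime_ultra_filter : ProperFilter prime_ultra.
Proof.
apply: Build_ProperFilter; first by rewrite /prime_ultra /= indic0; apply; exact: spec0.
split.
- by rewrite /prime_ultra /= indicT; exact: spec1F.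
- by move=> A B hA hB; rewrite /prime_ultra /= indicI => /specP [].
- by move=> A B AB hA hB; apply: hA; rewrite (indic_subset_mul AB); exact: specM.
Qed.

Lemma prime_ultra_setVsetC Z : prime_ultra Z \/ prime_ultra (~` Z).
Proof.
apply: contrapT => /not_orP [/contrapT h1 /contrapT h2]; apply: (@spec1F _ P).
by rewrite -(indicC_add Z); exact: specD.
Qed.

Lemma prime_ultra_ultra : UltraFilter prime_ultra.
Proof.
split=> [|G PG sub]; first exact: prime_ultra_filter.
apply/seteqP; split=> // Z GZ; case: (prime_ultra_setVsetC Z) => // /sub GnZ.
by have [i [Zi nZi]] := filter_ex (filterI GZ GnZ).
Qed.

End PrimeUltrafilter.

Section CompactHausdorff.
Variables (X : topologicalType) (hX : hausdorff_space X).

Lemma compact_closure_nbhs_sub (K O : set X) (y : X) : compact K -> open O -> K y -> O y ->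
  exists2 V, nbhs y V & K `&` closure V `<=` O.
Proof.
move=> cK oO Ky Oy; apply: contrapT => /forall2NP noV.
pose C := K `&` ~` O.
have cC : compact C by apply: compact_closedI => //; exact: open_closedC.
pose G := [set W | exists2 V, nbhs y V & C `&` closure V `<=` W].
have PG : ProperFilter G.
  apply: Build_ProperFilter.
    move=> [V nV sV]; case: (noV V) => // /existsNP [z /not_implyP [[Kz cz] nOz]].
    exact: (sV z).
  split; first by exists setT => //; exact: filterT.
  - move=> A B [V1 n1 s1] [V2 n2 s2]; exists (V1 `&` V2); first exact: filterI.
    move=> w [Cw cw]; split; [apply: s1 | apply: s2]; split => //.
      exact: closureS (@subIsetl _ V1 V2) _ cw.
    exact: closureS (@subIsetr _ V1 V2) _ cw.
  - by move=> A B AB [V nV sV]; exists V => // w /sV /AB.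
have GC : G C by exists setT; [exact: filterT | move=> w []].
have [z [[Kz nOz] clz]] := cC G PG GC.
apply: nOz; suff -> : z = y by [].
apply/esym/hX => A B nA nB; move: nB; rewrite nbhsE => -[B' [oB' B'z] B'B].
have GA : G (C `&` closure A) by exists A.
have [w [[_ cw] B'w]] := clz _ _ GA (open_nbhs_nbhs (conj oB' B'z)).
have [v [Av B'v]] := cw B' (open_nbhs_nbhs (conj oB' B'w)).
by exists v; split => //; exact: B'B.
Qed.

End CompactHausdorff.

Section ConstantRMorphism.
Variables (T : Type) (R : comPzRingType).

Lemma cst_zmod : zmod_morphism (@cst T R). Proof. by []. Qed.
HB.instance Definition _ := GRing.isZmodMorphism.Build R (T -> R) cst cst_zmod.
Lemma cst_monoid : monoid_morphism (@cst T R). Proof. by []. Qed.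
HB.instance Definition _ := GRing.isMonoidMorphism.Build R (T -> R) cst cst_monoid.

End ConstantRMorphism.

Lemma pi0_open_idem (R : comPzRingType) (hR : wlocal R) (e : R) : e * e = e ->
  pi0_open [set c : pi0 R | ~ sval (closed_pt hR c) e].
Proof.
move=> ee; rewrite /pi0_open.
suff -> : @pi0_of R @^-1` [set c | ~ sval (closed_pt hR c) e] = [set p | ~ sval p e].
  exact: ZopenD.
apply/seteqP; split => p /=.
all: have cp : Zcomponent p (closed_pt hR (pi0_of p)) := (closed_ptP hR (pi0_of p)).1.
all: have [pm mp] := Zcomponent_idemE ee cp.
- by move=> nm /pm.
- by move=> np /mp.
Qed.

Section CompactProbe.
Variables (R : comPzRingType) (hR : wlocal R) (X : topologicalType) (qX : X -> pi0 R).
Hypotheses (hX : hausdorff_space X) (cqX : pi0_continuous qX).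
Variables (K : set X) (cK : compact K).
Local Notation pt i := (closed_pt hR (qX i)).

Definition probe_ideal : set (X -> R) := [set s | forall i, K i -> sval (pt i) (s i)].

Lemma probe_ideal_ideal : ideal probe_ideal.
Proof.
split; first by move=> i _; exact: spec0.
- by move=> a b ha hb i Ki; apply: specD; [exact: ha | exact: hb].
- by move=> a b hb i Ki; apply: specM; exact: hb.
Qed.

Definition probe_ring := quot probe_ideal_ideal.
Definition probe_pi : {rmorphism (X -> R) -> probe_ring} := qpi probe_ideal_ideal.
Definition probe_alg : {rmorphism R -> probe_ring} := probe_pi \o cst.

Local Notation ultra Q := (prime_ultra (specmap probe_pi Q)).

Lemma probe_ultraK Q : ultra Q K.
Proof.
case: (prime_ultra_setVsetC (specmap probe_pi Q) K) => // nK; exfalso; apply: nK.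
apply: specmap_qpi_sup => i Ki; rewrite indicE memNset ?setCK //; exact: spec0.
Qed.

Lemma probe_limit Q : exists2 y, K y & ultra Q --> y.
Proof.
have := cK; rewrite compact_ultra => /(_ _ (prime_ultra_ultra _) (probe_ultraK (Q := Q))).
by case=> y [Ky Qy]; exists y.
Qed.

Definition probe_map (Q : Spec probe_ring) : X := s2val (cid2 (probe_limit Q)).

Lemma probe_map_in Q : K (probe_map Q). Proof. exact: s2valP (cid2 (probe_limit Q)). Qed.

Lemma probe_map_cvg Q : ultra Q --> probe_map Q.
Proof. exact: s2valP' (cid2 (probe_limit Q)). Qed.

Lemma probe_map_continuous : Zcontinuous probe_map.
Proof.
move=> O oO Q OQ.
have [V nV KVO] := compact_closure_nbhs_sub hX cK oO (probe_map_in Q) OQ.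
exists (probe_pi \1_V); split; first exact: probe_map_cvg.
move=> Q' Q'V; apply: KVO; split; first exact: probe_map_in.
move=> B Bx; have Q'B : ultra Q' B := probe_map_cvg Bx.
have PU := prime_ultra_filter (specmap probe_pi Q').
exact: filter_ex (filterI (Q'V : ultra Q' V) Q'B).
Qed.

Lemma probe_alg_idem (Q : Spec probe_ring) (e : R) : e * e = e ->
  ~ sval (pt (probe_map Q)) e -> sval (specmap probe_alg Q) (1 - e).
Proof.
move=> ee ne; set N := qX @^-1` [set c : pi0 R | ~ sval (closed_pt hR c) e].
have UN : ultra Q N.
  by apply: probe_map_cvg; apply: open_nbhs_nbhs; split => //; apply/cqX/pi0_open_idem.
have Js : probe_ideal (cst (1 - e) * \1_N).
  move=> i Ki; rewrite /GRing.mul /= indicE.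
  have [Ni|Ni] := pselect (N i).
    by rewrite mem_set // mulr1; case: (spec_idem (pt i) ee).
  by rewrite memNset // mulr0; exact: spec0.
by have := specmap_qpi_sup Q Js; rewrite /= rmorphM => /specP [].
Qed.

Lemma probe_map_over Q : qX (probe_map Q) = pi0_of (specmap probe_alg Q).
Proof.
rewrite -[qX _](pi0_of_closed_pt hR); apply/pi0_of_eq/Zcomponent_idemP => e ee.
split=> [me|Qe].
  have := probe_alg_idem (idemC ee) (spec_compl me).
  by rewrite opprB addrC subrK.
by apply: contrapT => /(probe_alg_idem ee); exact: spec_compl Qe.
Qed.

Lemma probe_relBetti : relBetti qX probe_alg probe_map.
Proof. by split; [exact: probe_map_continuous | exact: probe_map_over]. Qed.

Section UltraPoint.
Variables (U : set_system X) (UU : UltraFilter U) (UK : U K).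

Lemma ultra_prime : prime_ideal [set s : X -> R | U [set i | sval (pt i) (s i)]].
Proof.
split.
- by apply: filterS filterT => i _; exact: spec0.
- by move=> a b ha hb; apply: filterS (filterI ha hb) => i []; exact: specD.
- by move=> a b hb; apply: filterS hb => i; exact: specM.
- by move=> /filter_ex [i]; exact: spec1F.
- move=> a b hab; case: (in_ultra_setVsetC [set i | sval (pt i) (a i)] UU); first by left.
  by move=> h; right; apply: filterS (filterI hab h) => i [/specP []].
Qed.

Lemma probe_ideal_ultra : probe_ideal `<=` [set s | U [set i | sval (pt i) (s i)]].
Proof. by move=> s Js; apply: filterS UK => i; exact: Js. Qed.

Definition ultra_pt : Spec probe_ring :=
  quot_pt probe_ideal_ideal (P := exist _ _ ultra_prime) probe_ideal_ultra.

Lemma probe_map_ultra_pt x : U --> x -> probe_map ultra_pt = x.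
Proof.
move=> Ux; have PF := prime_ultra_filter (specmap probe_pi ultra_pt).
apply: (cvg_unique hX (probe_map_cvg (Q := ultra_pt))) => B /Ux UB.
rewrite nbhs_simpl /prime_ultra /probe_pi specmap_quot_pt /=.
by move=> /(filterI UB) /filter_ex [i [Bi /=]]; rewrite indicE mem_set //; exact: spec1F.
Qed.

End UltraPoint.

End CompactProbe.

Section InducedMapContinuity.
Variables (R : comPzRingType) (hR : wlocal R) (X Y : topologicalType)
  (qX : X -> pi0 R) (qY : Y -> pi0 R).
Hypotheses (hX : hausdorff_space X) (hY : hausdorff_space Y) (cqX : pi0_continuous qX).
Variable eta : forall (S : comPzRingType) (f : {rmorphism R -> S}), (Spec S -> X) -> (Spec S -> Y).
Hypothesis heta : betti_morphism qX qY eta.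
Local Notation g := (induced_map hR qX eta).

(* A point [x] of [K] in the closure of [B] is the limit of an ultrafilter [U]
   containing [B]; [eta] is continuous at the prime [ultra_pt U], which maps
   to [x], and a basic open around it contains [ultra_pt] of the principal
   ultrafilter of some point of [B]. *)
Lemma induced_map_preimageC_closed (K : set X) (O : set Y) : compact K -> open O ->
  closed (~` (g @^-1` O) `&` K).
Proof.
move=> cK oO; set B := ~` (g @^-1` O) `&` K.
apply/closure_id/seteqP; split => [|x clx]; first exact: subset_closure.
have Kx : K x.
  by have := closureS (@subIsetr _ _ K) clx; rewrite -(closure_id K).1 //; exact: compact_closed.
split => // Ogx.
have [U [UU BU]] := ultraFilterLemma (within_nbhs_proper clx).
have UB : U B by apply: BU; exact: withinT.
have UK : U K by apply: filterS UB => i [].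
have Ux : U --> x by move=> V nV; apply: BU; apply: filterS nV => i Vi _.
have rb := probe_relBetti hR hX cqX cK.
have [cG _] := heta.1 _ _ _ rb.
have GE := eta_pointwise hR heta hY hX rb.
have GQ : O (eta (probe_alg hR qX K) (probe_map cK) (ultra_pt hR qX UU UK)).
  by rewrite GE (probe_map_ultra_pt hR qX hX cK UU UK Ux).
have [a [Qa aO]] := cG O oO _ GQ.
have UC : U (~` [set i | sval (closed_pt hR (qX i)) (repr a i)]).
  by case: (in_ultra_setVsetC [set i | sval (closed_pt hR (qX i)) (repr a i)] UU).
have [i [[ngi Ki] nai]] := filter_ex (filterI UB UC).
have Ki' : principal_filter i K by apply/principal_filterP.
have := aO (ultra_pt hR qX (principal_filter_ultra i) Ki').
have Ui : principal_filter i --> i by move=> V /nbhs_singleton /principal_filterP.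
rewrite /preimage /= GE (probe_map_ultra_pt hR qX hX cK _ Ki' Ui).
by move=> Og; apply/ngi/Og => /principal_filterP.
Qed.

End InducedMapContinuity.

Theorem proposition4p10 (R : comPzRingType) (hR : wlocal R) :
  forall (X Y : topologicalType) (qX : X -> pi0 R) (qY : Y -> pi0 R),
    compactly_generated_hausdorff X -> compactly_generated_hausdorff Y ->
    pi0_continuous qX -> pi0_continuous qY ->
    (* faithful *)
    (forall g1 g2 : X -> Y,
        continuous g1 -> continuous g2 -> qY \o g1 = qX -> qY \o g2 = qX ->
        (forall (S : comPzRingType) (f : {rmorphism R -> S}) (phi : Spec S -> X),
            relBetti qX f phi -> g1 \o phi = g2 \o phi) ->
        g1 = g2) /\
    (* full *)
    (forall eta, betti_morphism qX qY eta ->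
       exists g : X -> Y,
         [/\ continuous g, qY \o g = qX &
             forall (S : comPzRingType) (f : {rmorphism R -> S}) (phi : Spec S -> X),
               relBetti qX f phi -> eta S f phi = g \o phi]).
Proof.
move=> X Y qX qY [hX cgX] [hY _] cqX _; split.
  by move=> g1 g2 _ _ _ _; apply: betti_faithful.
move=> eta heta; exists (induced_map hR qX eta); split.
- apply/continuousP => O oO; rewrite -[_ @^-1` O]setCK; apply: closed_openC; apply: cgX => K cK.
  exact: (induced_map_preimageC_closed (hR := hR) hX hY cqX heta cK oO).
- by apply: funext => x /=; exact: qY_induced_map.
- by move=> S f phi rb; apply: funext => P /=; exact: (eta_pointwise hR heta hY hX rb).
Qed.
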